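(* In the setting of the context, at every iteration $n$ the search directions satisfy $\langle v_{n,j},J_{p^*}(v_{n,k})\rangle=0$ for all $1\le j<k\le N_n$.
   Context: $X$ is a real smooth, uniformly convex Banach space, $Y$ a real Banach space, $A:X\to Y$ bounded linear with adjoint $A^*$, $y\in\mathcal{R}(A)$. Fix $p,r\in(1,\infty)$, $p^*=p/(p-1)$. $J_p:X\to X^*$ is the duality mapping with gauge $t^{p-1}$, $J_{p^*}:X^*\to X$ the duality mapping of $X^*$ with gauge $t^{p^*-1}$ ($\langle J_{p^*}(v),v\rangle=\|v\|^{p^*}$, $\|J_{p^*}(v)\|=\|v\|^{p^*-1}$), $J_r^Y$ a single-valued selection of the duality mapping of $Y$ with gauge $t^{r-1}$. Method: choose $x_0$ with $J_p(x_0)\in\overline{\mathcal{R}(A^* )}$, fix $N\in\mathbb{N}$, $N_n=\min(N,n+1)$. For $n=0,1,\dots$: $w_n=Ax_n-y$; stop if $w_n=0$. Else $u_n=A^*J_r^Y(w_n)$. Let $s_n$ minimize $s\mapsto\|u_n-\sum_{i=1}^{N_{n-1}}s_iv_{n-1,i}\|^{p^*}_{X^*}$ (empty sum for $n=0$), set $v_{n,N_n}=u_n-\sum_k s_{n,k}v_{n-1,k}$; $v_{n,1},\dots,v_{n,N_n-1}$ are the last $N_n-1$ entries of the previous list $v_{n-1,1},\dots,v_{n-1,N_{n-1}}$, in order. With precursors $w^*_{n,k}$ ($v_{n,k}=A^*w^*_{n,k}$, built by the same linear combinations from $J_r^Y(w_n)$) and offsets $\beta_{n,k}=\langle w^*_{n,k},y\rangle$,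 $t_n$ minimizes $h_n(t)=\tfrac1{p^*}\|J_p(x_n)-\sum_k t_kv_{n,k}\|^{p^*}+\sum_k t_k\beta_{n,k}$ and $x_{n+1}=J_{p^*}(J_p(x_n)-\sum_k t_{n,k}v_{n,k})$. *)

From HB Require Import structures.
From mathcomp Require Import all_boot all_order all_algebra.
From mathcomp Require Import all_classical all_reals all_analysis.
Set Implicit Arguments. Unset Strict Implicit. Unset Printing Implicit Defensive.
Import Order.TTheory GRing.Theory Num.Theory.
Import numFieldNormedType.Exports.
Local Open Scope classical_set_scope.
Local Open Scope ring_scope.

Section Defs.
Context {R : realType}.

Definition is_dual (V : normedModType R) (f : V -> R) : Prop :=
  (forall (a : R) (x y : V), f (a *: x + y) = a * f x + f y) /\ continuous f.

Definition dnorm (V : normedModType R) (f : V -> R) : R :=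
  sup [set `|f x| | x in [set x : V | `|x| <= 1]].

Definition uniformly_convex (V : normedModType R) : Prop :=
  forall eps : R, 0 < eps <= 2 -> exists2 delta : R, 0 < delta &
    forall x y : V, `|x| <= 1 -> `|y| <= 1 -> eps <= `|x - y| ->
      `|(2^-1 : R) *: (x + y)| <= 1 - delta.

Definition smooth_space (V : normedModType R) : Prop :=
  forall x : V, x != 0 -> forall h : V,
    derivable (fun t : R => `|x + t *: h| : R^o) 0 1.

Definition bounded_linear (V W : normedModType R) (A : V -> W) : Prop :=
  (forall (a : R) (x y : V), A (a *: x + y) = a *: A x + A y) /\ continuous A.

(* duality mapping of V with gauge t^{q-1} (a single-valued selection):
   <J x, x> = ||x||^q and ||J x||_* = ||x||^{q-1} *)
Definition duality_selection (V : normedModType R) (q : R) (J : V -> V -> R) :=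
  forall x : V, is_dual (J x) /\ J x x = `|x| `^ q /\ dnorm (J x) = `|x| `^ (q - 1).

(* duality mapping J_{q} of V^* with values in V (reflexivity identifies V^** with V):
   <f, J f> = ||f||^q and ||J f|| = ||f||^{q-1} *)
Definition dual_duality_map (V : normedModType R) (q : R) (J : (V -> R) -> V) :=
  forall f : V -> R, is_dual f ->
    f (J f) = dnorm f `^ q /\ `|J f| = dnorm f `^ (q - 1).

End Defs.

(* N_n = min(N, n+1); number of directions at the previous step (N_{-1} := 0) *)
Definition Nn (N n : nat) : nat := minn N n.+1.
Definition Nprev (N n : nat) : nat := if n is n'.+1 then Nn N n' else 0%N.

(* Each new direction is the residual u_n - sum_i s_i v_{n-1,i} of minimal dual
   norm, so perturbing a single coefficient shows that it is Birkhoff-James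
   orthogonal to every previous direction: ||v|| <= ||v - tau v_{n-1,i}|| for all
   tau.  Since X is uniformly convex, a functional g Birkhoff orthogonal to it
   must vanish at the point where v attains its norm, and that point is
   J_{p*}(v) up to a positive factor.  The retained directions form a shifted
   block of the previous list, so orthogonality propagates by induction on n. *)

From HB Require Import structures.
From mathcomp Require Import all_boot all_order all_algebra.
From mathcomp Require Import all_classical all_reals all_analysis.
From mathcomp Require Import ring lra zify.
Import Order.TTheory GRing.Theory Num.Theory.
Import numFieldNormedType.Exports.
Local Open Scope classical_set_scope.
Local Open Scope ring_scope.

Section DualSpace.
Context {R : realType} {V : normedModType R}.
Implicit Types (f g : V -> R) (x : V).

Lemma dual0 {f} : is_dual f -> f 0 = 0.
Proof. by move=> [lf _]; have := lf 1 0 0; rewrite scaler0 addr0 mul1r => h; lra. Qed.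

Lemma dualZ {f} a x : is_dual f -> f (a *: x) = a * f x.
Proof. by move=> hf; have := hf.1 a x 0; rewrite !addr0 dual0 // addr0. Qed.

Lemma dualD {f} x1 x2 : is_dual f -> f (x1 + x2) = f x1 + f x2.
Proof. by move=> hf; have := hf.1 1 x1 x2; rewrite scale1r mul1r. Qed.

Lemma dualN {f} x : is_dual f -> f (- x) = - f x.
Proof. by move=> hf; rewrite -scaleN1r dualZ // mulN1r. Qed.

Lemma dualB {f} x1 x2 : is_dual f -> f (x1 - x2) = f x1 - f x2.
Proof. by move=> hf; rewrite dualD // dualN. Qed.

Lemma is_dual_cst0 : is_dual (fun _ : V => 0).
Proof. by split=> [*|x]; [ring | exact: cst_continuous]. Qed.

Lemma is_dualBZ {f g} c : is_dual f -> is_dual g -> is_dual (fun x => f x - c * g x).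
Proof.
move=> hf hg; split=> [a x1 x2|x]; first by rewrite hf.1 hg.1; ring.
exact: continuousB (hf.2 x) (continuousM (@cst_continuous _ _ c x) (hg.2 x)).
Qed.

Lemma is_dualB {f g} : is_dual f -> is_dual g -> is_dual (fun x => f x - g x).
Proof.
by move=> hf hg; have := is_dualBZ 1 hf hg; under eq_fun do rewrite mul1r.
Qed.

Lemma is_dualN {g} : is_dual g -> is_dual (fun x => - g x).
Proof. by move=> hg; have := is_dualB is_dual_cst0 hg; under eq_fun do rewrite sub0r. Qed.

Lemma is_dual_sum (I : seq nat) (c : nat -> R) (F : nat -> V -> R) :
  (forall i, i \in I -> is_dual (F i)) -> is_dual (fun x => \sum_(i <- I) c i * F i x).
Proof.
elim: I => [|i I IH] hF; first by under eq_fun do rewrite big_nil; exact: is_dual_cst0.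
have hI : is_dual (fun x => \sum_(j <- I) c j * F j x).
  by apply: IH => j jI; apply: hF; rewrite inE jI orbT.
under eq_fun do rewrite big_cons addrC.
by have := is_dualBZ (- c i) hI (hF i (mem_head _ _)); under eq_fun do rewrite mulNr opprK.
Qed.

Lemma is_dual_comp {W : normedModType R} (B : V -> W) (h : W -> R) :
  bounded_linear B -> is_dual h -> is_dual (fun x => h (B x)).
Proof.
move=> [lB cB] hh; split=> [a x1 x2|x]; first by rewrite lB hh.1.
exact: continuous_comp (cB x) (hh.2 (B x)).
Qed.

(* Continuity at 0 gives a ball of radius e on which |f| < 1; rescale into it. *)
Lemma dual_bounded {f} : is_dual f -> exists2 C, 0 <= C & forall x, `|f x| <= C * `|x|.
Proof.
move=> hf; have := @cvgr_dist_lt _ _ _ _ _ _ _ (hf.2 0) 1 ltr01.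
rewrite dual0 // => /(_ _) /(@nbhs_norm0P R V) [e /= e0 He].
exists (2 / e); first by rewrite divr_ge0 // ltW.
move=> x; have [->|x0] := eqVneq x 0; first by rewrite dual0 // !normr0 mulr0.
have nx : 0 < `|x| by rewrite normr_gt0.
pose a := e / 2 / `|x|; have a0 : 0 < a by rewrite !divr_gt0.
have : `|a *: x| < e by rewrite normrZ gtr0_norm // divfK ?gt_eqF //; lra.
move=> /He /=; rewrite sub0r normrN dualZ // normrM gtr0_norm // => h.
have -> : 2 / e * `|x| = a^-1 by rewrite /a !invfM !invrK; field; rewrite !gt_eqF.
by rewrite -(ler_pM2l a0) mulfV ?gt_eqF // ltW.
Qed.

Lemma dnorm_has_sup {f} : is_dual f -> has_sup [set `|f x| | x in [set x : V | `|x| <= 1]].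
Proof.
move=> hf; have [C C0 HC] := dual_bounded hf.
split; first by exists `|f 0|, 0 => //=; rewrite normr0.
exists C => _ [x /= x1 <-]; apply: le_trans (HC x) _.
by rewrite -{2}(mulr1 C) ler_wpM2l.
Qed.

Lemma dnorm_ge0 {f} : is_dual f -> 0 <= dnorm f.
Proof.
move=> hf; apply: (sup_upper_bound (dnorm_has_sup hf)).
by exists 0; rewrite /= ?(dual0 hf) normr0.
Qed.

Lemma dnorm_ub {f} x : is_dual f -> `|f x| <= dnorm f * `|x|.
Proof.
move=> hf; have [->|x0] := eqVneq x 0; first by rewrite dual0 // !normr0 mulr0.
have nx : 0 < `|x| by rewrite normr_gt0.
have ix : 0 < `|x|^-1 by rewrite invr_gt0.
rewrite -(ler_pM2l ix) mulrCA mulVf ?gt_eqF // mulr1.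
apply: (sup_upper_bound (dnorm_has_sup hf)); exists (`|x|^-1 *: x) => /=.
  by rewrite normrZ gtr0_norm // mulVf // normr_eq0.
by rewrite dualZ // normrM gtr0_norm.
Qed.

Lemma dual_le_dnorm {f} x : is_dual f -> `|x| <= 1 -> f x <= dnorm f.
Proof.
move=> hf x1; apply: le_trans (ler_norm _) (le_trans (dnorm_ub x hf) _).
by rewrite -{2}(mulr1 (dnorm f)) ler_wpM2l // dnorm_ge0.
Qed.

Lemma dnorm_le {f} C : is_dual f -> (forall x, `|x| <= 1 -> f x <= C) -> dnorm f <= C.
Proof.
move=> hf hC; apply: ge_sup; first by exists `|f 0|, 0 => //=; rewrite normr0.
move=> _ [x /= x1 <-]; rewrite ler_norml hC // andbT lerNl -dualN //.
by apply: hC; rewrite normrN.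
Qed.

End DualSpace.

Section BirkhoffOrthogonality.
Context {R : realType} {V : normedModType R}.

Definition birkhoff_orth (f g : V -> R) :=
  forall tau : R, dnorm f <= dnorm (fun x => f x - tau * g x).

Hypothesis uconvV : uniformly_convex V.
Implicit Types (f g : V -> R) (x : V).

Lemma near_norming_close {f M x0 eps} : is_dual f -> dnorm f = M ->
  `|x0| <= 1 -> f x0 = M -> 0 < eps ->
  exists2 d, 0 < d & forall x, `|x| <= 1 -> M * (1 - d) < f x -> `|x - x0| < eps.
Proof.
move=> hf dnf x01 fx0 eps0; pose eps' := Num.min eps 2.
have eps'0 : 0 < eps' <= 2 by rewrite /eps' lt_min eps0 ge_min lexx orbT ltr0n.
have [d d0 Hd] := uconvV eps' eps'0; exists d => // x x1 fx.
have eps'_le : eps' <= eps by rewrite /eps' ge_min lexx.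
apply: lt_le_trans eps'_le; rewrite ltNge; apply/negP => /(Hd _ _ x1 x01) mid.
have M0 : 0 <= M by rewrite -dnf dnorm_ge0.
have := dnorm_ub (2^-1 *: (x + x0)) hf; rewrite dnf dualZ // dualD // fx0.
move=> /(le_trans (ler_norm _)) /le_trans /(_ (ler_wpM2l M0 mid)).
nra.
Qed.

(* If g x0 > 0, then f - s g has norm < M for a small s > 0: near x0 we have
   g >= g x0 / 2, and away from x0 uniform convexity keeps f below M (1 - d). *)
Lemma norming_point_le0 {f g M x0} : is_dual f -> is_dual g -> 0 < M -> dnorm f = M ->
  `|x0| <= 1 -> f x0 = M -> (forall s, 0 < s -> M <= dnorm (fun x => f x - s * g x)) ->
  g x0 <= 0.
Proof.
move=> hf hg M0 dnf x01 fx0 Hs; rewrite leNgt; apply/negP => gx0_gt0.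
have [G G0 HG] := dual_bounded hg.
have eps0 : 0 < g x0 / (2 * (G + 1)) by apply: divr_gt0 => //; lra.
have [d d0 Hd] := near_norming_close hf dnf x01 fx0 eps0.
pose s := M * d / (g x0 / 4 + G + 1).
have s0 : 0 < s by rewrite divr_gt0 ?mulr_gt0 //; lra.
have sd : s * (g x0 / 4 + G + 1) = M * d by rewrite divfK // gt_eqF //; lra.
suff : dnorm (fun x => f x - s * g x) <= M - s * (g x0 / 4).
  by have := Hs s s0; nra.
apply: dnorm_le (is_dualBZ s hf hg) _ => x x1.
have fxM : f x <= M by rewrite -dnf dual_le_dnorm.
have gx_lb : - G <= g x.
  have := HG x; rewrite ler_norml => /andP[lb _]; apply: le_trans lb.
  by rewrite lerN2 -{2}(mulr1 G) ler_wpM2l.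
have [fx_small|/(Hd _ x1) close] := leP (f x) (M * (1 - d)).
  have sgx : - (s * G) <= s * g x by rewrite -mulrN ler_wpM2l // ltW.
  nra.
have gx_lb' : g x0 / 2 <= g x.
  have := HG (x0 - x); rewrite dualB // [`|x0 - x|]distrC => /(le_trans (ler_norm _)) h.
  have : G * `|x - x0| <= G * (g x0 / (2 * (G + 1))) by rewrite ler_wpM2l // ltW.
  have -> : G * (g x0 / (2 * (G + 1))) = g x0 / 2 * (G / (G + 1)) by field; lra.
  have : G / (G + 1) <= 1 by rewrite ler_pdivrMr; lra.
  nra.
have sgx : s * (g x0 / 2) <= s * g x by rewrite ler_wpM2l // ltW.
nra.
Qed.

Lemma birkhoff_orth_duality_map {q : R} {J : (V -> R) -> V} {f g} :
  1 < q -> dual_duality_map q J -> is_dual f -> is_dual g -> birkhoff_orth f g ->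
  g (J f) = 0.
Proof.
move=> q1 HJ hf hg orth; have [Jf_val Jf_norm] := HJ f hf.
have := dnorm_ge0 hf; rewrite le_eqVlt => /orP[/eqP M0|M0].
  by move: Jf_norm; rewrite -M0 powR0 ?subr_eq0 ?gt_eqF // => /normr0_eq0 ->; exact: dual0.
pose a := dnorm f `^ (q - 1); have a0 : 0 < a by rewrite powR_gt0.
pose x0 := a^-1 *: J f.
have x01 : `|x0| <= 1 by rewrite normrZ Jf_norm gtr0_norm ?invr_gt0 // mulVf ?gt_eqF.
have fx0 : f x0 = dnorm f.
  rewrite dualZ // Jf_val -[in dnorm f `^ q](subrK 1 q) powRD ?powRr1 ?(ltW M0) //.
    by rewrite mulrA mulVf ?gt_eqF // mul1r.
  by apply/implyP => _; rewrite gt_eqF.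
have gx0_le : g x0 <= 0 by apply: norming_point_le0 hf hg M0 _ x01 fx0 _.
have ngx0_le : - g x0 <= 0.
  apply: (norming_point_le0 hf (is_dualN hg) M0 _ x01 fx0) => // s _.
  by under eq_fun do rewrite mulrN -mulNr; exact: orth.
have -> : J f = a *: x0 by rewrite scalerA mulfV ?gt_eqF // scale1r.
by rewrite dualZ // (_ : g x0 = 0) ?mulr0 //; lra.
Qed.

End BirkhoffOrthogonality.

Section DirectionUpdate.
Context {R : realType} {V : normedModType R}.
Implicit Types (u : V -> R) (w : nat -> V -> R) (c : nat -> R).

Definition residual u w c (m : nat) : V -> R :=
  fun x => u x - \sum_(1 <= k < m.+1) c k * w k x.

Definition dual_family w (m : nat) :=
  forall k, (1 <= k)%N -> (k <= m)%N -> is_dual (w k).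

Definition J_orthogonal (J : (V -> R) -> V) w (m : nat) :=
  forall j k, (1 <= j)%N -> (j < k)%N -> (k <= m)%N -> w j (J (w k)) = 0.

Lemma is_dual_residual {u w} c {m} : is_dual u -> dual_family w m -> is_dual (residual u w c m).
Proof.
move=> hu hw; apply: (is_dualB hu (is_dual_sum (index_iota 1 m.+1) c w _)) => k.
by rewrite mem_index_iota => /andP[k1 km]; apply: hw.
Qed.

Lemma residual_perturb u w c m i tau : (1 <= i <= m)%N ->
  residual u w (fun k => c k + (if k == i then tau else 0)) m
  = (fun x => residual u w c m x - tau * w i x).
Proof.
move=> im; apply: funext => x; rewrite /residual.
under eq_bigr do rewrite mulrDl; rewrite big_split /= opprD addrA; congr (_ - _).
rewrite (bigD1_seq i) ?iota_uniq ?mem_index_iota ?ltnS //=.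
by rewrite eqxx big1 ?addr0 // => k /negPf ->; rewrite mul0r.
Qed.

Lemma residual_argmin_birkhoff_orth {q : R} {u w c m} i : 0 < q ->
  is_dual u -> dual_family w m ->
  (forall c', dnorm (residual u w c m) `^ q <= dnorm (residual u w c' m) `^ q) ->
  (1 <= i <= m)%N -> birkhoff_orth (residual u w c m) (w i).
Proof.
move=> q0 hu hw cmin /andP[i1 im] tau.
have hr := is_dual_residual c hu hw.
have := cmin (fun k => c k + (if k == i then tau else 0)).
rewrite residual_perturb ?i1 // (le_mono_in (gt0_ltr_powR q0)) ?nnegrE ?dnorm_ge0 //.
exact: is_dualBZ hr (hw _ i1 im).
Qed.

Lemma dual_family_shift_append w w' m' m : (m <= m'.+1)%N ->
  (forall k, (1 <= k)%N -> (k < m)%N -> w k = w' (k + (m'.+1 - m))%N) ->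
  dual_family w' m' -> is_dual (w m) -> dual_family w m.
Proof.
move=> mm' shift hw' hm k k1 km; case: ltngtP km => // [klt _|-> //].
by rewrite shift //; apply: hw'; lia.
Qed.

Lemma J_orthogonal_shift_append J w w' m' m : (m <= m'.+1)%N ->
  (forall k, (1 <= k)%N -> (k < m)%N -> w k = w' (k + (m'.+1 - m))%N) ->
  J_orthogonal J w' m' -> (forall i, (1 <= i)%N -> (i <= m')%N -> w' i (J (w m)) = 0) ->
  J_orthogonal J w m.
Proof.
move=> mm' shift orth' orth_new j k j1 jk km.
have jm : (j < m)%N by apply: leq_trans jk km.
rewrite shift //; case: ltngtP km => // [klt _|-> _]; last by apply: orth_new; lia.
by rewrite shift; [apply: orth' | |]; lia.
Qed.

(* [w] keeps the last [m - 1] of the [m'] directions [w'] and appends the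
   residual as its [m]-th entry. *)
Lemma residual_update_J_orthogonal (q : R) (J : (V -> R) -> V) u w' c w m' m :
  uniformly_convex V -> 1 < q -> dual_duality_map q J -> is_dual u ->
  dual_family w' m' -> J_orthogonal J w' m' ->
  (forall c', dnorm (residual u w' c m') `^ q <= dnorm (residual u w' c' m') `^ q) ->
  w m = residual u w' c m' -> (m <= m'.+1)%N ->
  (forall k, (1 <= k)%N -> (k < m)%N -> w k = w' (k + (m'.+1 - m))%N) ->
  dual_family w m /\ J_orthogonal J w m.
Proof.
move=> uconvV q1 HJ hu hw' orth' cmin wm mm' shift.
have hm : is_dual (w m) by rewrite wm; exact: is_dual_residual.
split; first exact: dual_family_shift_append shift hw' hm.
apply: J_orthogonal_shift_append mm' shift orth' _ => i i1 im.
have q0 : 0 < q by apply: lt_trans q1.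
rewrite wm; apply: (birkhoff_orth_duality_map uconvV q1 HJ).
- exact: is_dual_residual.
- exact: hw'.
- by apply: (residual_argmin_birkhoff_orth i q0 hu hw' cmin); rewrite i1 im.
Qed.

End DirectionUpdate.

Theorem mainTheorem3 (R : realType)
  (X Y : completeNormedModType R)
  (A : X -> Y) (y : Y) (p r : R) (N : nat)
  (Jp : X -> X -> R) (Jps : (X -> R) -> X) (JrY : Y -> Y -> R)
  (xs : nat -> X) (s t : nat -> nat -> R)
  (v : nat -> nat -> X -> R) (wst : nat -> nat -> Y -> R) :
  smooth_space X -> uniformly_convex X ->
  bounded_linear A ->
  (exists xd : X, A xd = y) ->
  1 < p -> 1 < r -> (0 < N)%N ->
  let ps := p / (p - 1) in
  duality_selection p Jp ->
  dual_duality_map ps Jps ->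
  duality_selection r JrY ->
  (* J_p(x_0) lies in the closure of R(A^* ) in X^* *)
  (forall eps : R, 0 < eps ->
     exists2 eta : Y -> R, is_dual eta & dnorm (fun x => Jp (xs 0%N) x - eta (A x)) < eps) ->
  (* the iteration, as long as it has not stopped (w_m = A x_m - y <> 0 for m <= n) *)
  (forall n : nat, (forall m : nat, (m <= n)%N -> A (xs m) - y != 0) ->
     let w := A (xs n) - y in
     let u := fun x : X => JrY w (A x) in
     (* s_n minimizes s |-> || u_n - sum_{i=1}^{N_{n-1}} s_i v_{n-1,i} ||^{p*} *)
     (forall s' : nat -> R,
        dnorm (fun x => u x - \sum_(1 <= i < (Nprev N n).+1) s n i * v n.-1 i x) `^ ps
        <= dnorm (fun x => u x - \sum_(1 <= i < (Nprev N n).+1) s' i * v n.-1 i x) `^ ps) /\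
     (* new direction and its precursor *)
     v n (Nn N n) = (fun x => u x - \sum_(1 <= k < (Nprev N n).+1) s n k * v n.-1 k x) /\
     wst n (Nn N n) = (fun z => JrY w z - \sum_(1 <= k < (Nprev N n).+1) s n k * wst n.-1 k z) /\
     (* the first N_n - 1 entries are the last N_n - 1 entries of the previous list *)
     (forall k : nat, (1 <= k)%N -> (k < Nn N n)%N ->
        v n k = v n.-1 (k + ((Nprev N n).+1 - Nn N n)%N) /\
        wst n k = wst n.-1 (k + ((Nprev N n).+1 - Nn N n)%N)) /\
     (* t_n minimizes h_n, with offsets beta_{n,k} = <w*_{n,k}, y> *)
     (forall t' : nat -> R,
        (ps^-1 * dnorm (fun x => Jp (xs n) x
                          - \sum_(1 <= k < (Nn N n).+1) t n k * v n k x) `^ ps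
         + \sum_(1 <= k < (Nn N n).+1) t n k * wst n k y)
        <= (ps^-1 * dnorm (fun x => Jp (xs n) x
                          - \sum_(1 <= k < (Nn N n).+1) t' k * v n k x) `^ ps
         + \sum_(1 <= k < (Nn N n).+1) t' k * wst n k y)) /\
     xs n.+1 = Jps (fun x => Jp (xs n) x - \sum_(1 <= k < (Nn N n).+1) t n k * v n k x)) ->
  forall n : nat, (forall m : nat, (m <= n)%N -> A (xs m) - y != 0) ->
  forall j k : nat, (1 <= j)%N -> (j < k)%N -> (k <= Nn N n)%N ->
    v n j (Jps (v n k)) = 0.
Proof.
(* Orthogonality only uses the minimization defining [s_n] and the list update. *)
move=> _ uconvX linA _ p1 _ _ ps _ HJps HJr _ Hit.
have ps1 : 1 < ps by rewrite /ps ltr_pdivlMr ?subr_gt0 // mul1r; lra.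
have step n : (forall m, (m <= n)%N -> A (xs m) - y != 0) ->
    dual_family (v n.-1) (Nprev N n) -> J_orthogonal Jps (v n.-1) (Nprev N n) ->
    dual_family (v n) (Nn N n) /\ J_orthogonal Jps (v n) (Nn N n).
  move=> running hv' orth'; have [smin [vnew [_ [shift _]]]] := Hit n running.
  apply: residual_update_J_orthogonal uconvX ps1 HJps _ hv' orth' smin vnew _ _.
  - exact: is_dual_comp linA (HJr _).1.
  - by case: (n) => [|n']; rewrite /Nprev /Nn; lia.
  - by move=> k k1 kn; case: (shift k k1 kn).
suff invariant n : (forall m, (m <= n)%N -> A (xs m) - y != 0) ->
    dual_family (v n) (Nn N n) /\ J_orthogonal Jps (v n) (Nn N n).
  by move=> n running; exact: (invariant n running).2.
elim: n => [|n IH] running; apply: step => //.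
- by move=> k k1 k0; move: k0; rewrite /Nprev; lia.
- by move=> j k j1 jk k0; move: k0; rewrite /Nprev; lia.
- exact: (IH (fun m mn => running m (leqW mn))).1.
- exact: (IH (fun m mn => running m (leqW mn))).2.
Qed.
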